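(* Let $T$ be a finite set of types and $n$ a positive integer. Suppose there exist $(\hat\lambda,\hat\mu)\in\mathcal{S}(\mathcal{G}_T^n)$ such that $\hat\lambda/(1-\hat\mu)=\gamma(\mathcal{G}_T^n)$. Then there exist $(c^1,f^1),(c^2,f^2)\in T$, $(x_1,y_1,z_1),(x_2,y_2,z_2)\in\mathcal{I}_{\mathcal{R}}$ and $\eta\in[0,1]$ such that for $j=1,2$ $$(z_j-x_j)f^j(x_j)+(y_j-z_j)f^j(x_j+1)+c^j(x_j)=\hat\lambda\,c^j(y_j)+\hat\mu\,c^j(x_j),$$ and $$\eta\big[z_1f^1(x_1)+(y_1-z_1)f^1(x_1+1)\big]+(1-\eta)\big[z_2f^2(x_2)+(y_2-z_2)f^2(x_2+1)\big]=\eta\,x_1f^1(x_1)+(1-\eta)\,x_2f^2(x_2).$$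
   Context: $T=\{(c_1,f_1),\dots,(c_m,f_m)\}$ is a finite set of types with $c_t,f_t:\{1,\dots,n\}\to\mathbb{R}$, extended by $c_t(0)=f_t(0)=f_t(n+1)=0$. With $\mathbb{N}=\{0,1,\dots\}$, $\mathcal{I}=\{(x,y,z)\in\mathbb{N}^3:1\le x+y-z\le n,\ z\le\min\{x,y\}\}$ and $\mathcal{I}_{\mathcal{R}}=\{(x,y,z)\in\mathcal{I}:x+y-z=n\text{ or }(x-z)(y-z)z=0\}$. $\mathcal{S}(\mathcal{G}_T^n)$ is the set of $(\lambda,\mu)$ with $\lambda>0$, $\mu<1$ such that for all $(c,f)\in T$ and all $(x,y,z)\in\mathcal{I}_{\mathcal{R}}$: $(z-x)f(x)+(y-z)f(x+1)+c(x)\le\lambda c(y)+\mu c(x)$. $\gamma(\mathcal{G}_T^n)=\inf\{\lambda/(1-\mu):(\lambda,\mu)\in\mathcal{S}(\mathcal{G}_T^n)\}$. *)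

From Stdlib Require Import Reals Lra Lia List.
Open Scope R_scope.

(* A type (c, f) is a pair of real functions on {1,...,n}; we represent them as
   functions nat -> R and only use their values on {1,...,n} via [ext],
   which implements the convention c(0)=f(0)=f(n+1)=0 (values outside
   {1..n} are set to 0; only 0 and n+1 are ever evaluated outside). *)
Definition typ : Type := ((nat -> R) * (nat -> R))%type.

Definition ext (n : nat) (g : nat -> R) (k : nat) : R :=
  if andb (Nat.leb 1 k) (Nat.leb k n) then g k else 0.

Definition in_I (n x y z : nat) : Prop :=
  (z <= x)%nat /\ (z <= y)%nat /\ (1 <= x + y - z)%nat /\ (x + y - z <= n)%nat.

Definition in_IR (n x y z : nat) : Prop :=
  in_I n x y z /\ ((x + y - z)%nat = n \/ ((x - z) * (y - z) * z)%nat = 0%nat).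

Definition ineq_lhs (n : nat) (t : typ) (x y z : nat) : R :=
  let c := ext n (fst t) in let f := ext n (snd t) in
  (INR z - INR x) * f x + (INR y - INR z) * f (S x) + c x.

Definition ineq_rhs (n : nat) (t : typ) (lam mu : R) (x y : nat) : R :=
  let c := ext n (fst t) in lam * c y + mu * c x.

Definition in_S (T : list typ) (n : nat) (lam mu : R) : Prop :=
  0 < lam /\ mu < 1 /\
  forall t, In t T -> forall x y z, in_IR n x y z ->
    ineq_lhs n t x y z <= ineq_rhs n t lam mu x y.

(* gamma(G_T^n) = inf { lam/(1-mu) : (lam,mu) in S } ; "g = gamma" is
   expressed as g being the greatest lower bound of that set. *)
Definition ratio_set (T : list typ) (n : nat) (r : R) : Prop :=
  exists lam mu, in_S T n lam mu /\ r = lam / (1 - mu).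

Definition is_gamma (T : list typ) (n : nat) (g : R) : Prop :=
  (forall r, ratio_set T n r -> g <= r) /\
  (forall b, (forall r, ratio_set T n r -> b <= r) -> b <= g).

(** If two tight constraints of (lh, mh) have slopes [rhs_slope] of opposite
    signs, a convex combination of them gives the identity, because for a
    tight constraint the bracket [z f(x) + (y-z) f(x+1)] minus [x f(x)] is
    exactly the slope.  Otherwise every tight constraint has slope of one
    strict sign s.  Moving (lh, mh) by a small step d in direction s along the
    curve on which lh/(1-mh) is constant, and lowering lh by d^2, keeps every
    constraint satisfied (slack ones by continuity, tight ones by the first
    order term) while strictly decreasing the ratio, contradicting optimality. *)

From Stdlib Require Import Reals Lra Lia List Psatz Classical.
Open Scope R_scope.

Definition near_0_right (P : R -> Prop) : Prop :=
  exists eps, 0 < eps /\ forall d, 0 < d <= eps -> P d.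

Lemma near_0_right_witness (P : R -> Prop) :
  near_0_right P -> exists d, 0 < d /\ P d.
Proof. intros (eps & Heps & HP). exists eps. split; [lra | apply HP; lra]. Qed.

Lemma near_0_right_mono (P Q : R -> Prop) :
  (forall d, 0 < d -> P d -> Q d) -> near_0_right P -> near_0_right Q.
Proof.
  intros HPQ (eps & Heps & HP). exists eps. split; [exact Heps|].
  intros d Hd. apply HPQ, HP; lra.
Qed.

Lemma near_0_right_and (P Q : R -> Prop) :
  near_0_right P -> near_0_right Q -> near_0_right (fun d => P d /\ Q d).
Proof.
  intros (e1 & He1 & HP) (e2 & He2 & HQ).
  exists (Rmin e1 e2). split; [now apply Rmin_pos|].
  intros d Hd. pose proof (Rmin_l e1 e2). pose proof (Rmin_r e1 e2).
  split; [apply HP | apply HQ]; lra.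
Qed.

Lemma near_0_right_forall_in {X : Type} (L : list X) (P : X -> R -> Prop) :
  (forall k, In k L -> near_0_right (P k)) ->
  near_0_right (fun d => forall k, In k L -> P k d).
Proof.
  induction L as [|k L IH]; intros HL.
  - exists 1. split; [lra | intros d _ k []].
  - apply (near_0_right_mono (fun d => P k d /\ forall k', In k' L -> P k' d)).
    + intros d _ [Hk HL'] k' [<- | Hk']; auto.
    + apply near_0_right_and; [apply HL, in_eq|].
      apply IH. intros k' Hk'. apply HL, in_cons, Hk'.
Qed.

Lemma near_0_right_mul_le (k c : R) :
  0 < k -> 0 < c -> near_0_right (fun d => d * k <= c).
Proof.
  intros Hk Hc. exists (c / k). split; [now apply Rdiv_lt_0_compat|].
  intros d [_ Hd]. apply (Rmult_le_compat_r k) in Hd; [|lra].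
  replace c with (c / k * k) by (field; lra). exact Hd.
Qed.

Lemma near_0_right_quadratic_nonneg (g e a : R) :
  0 <= g -> 0 < g \/ 0 < e -> near_0_right (fun d => 0 <= g + d * e - d * d * a).
Proof.
  intros Hg Hpos.
  pose proof (Rle_abs a). pose proof (Rabs_pos a).
  pose proof (Rle_abs (- e)). rewrite Rabs_Ropp in *. pose proof (Rabs_pos e).
  destruct Hpos as [Hg_pos | He_pos].
  - apply (near_0_right_mono (fun d => d * 1 <= 1 /\ d * (Rabs e + Rabs a + 1) <= g)).
    + intros d Hd [Hd1 Hdg].
      assert (d * d * a <= d * d * Rabs a) by (apply Rmult_le_compat_l; nra).
      assert (d * d * Rabs a <= d * Rabs a) by (apply Rmult_le_compat_r; nra).
      assert (- (d * Rabs e) <= d * e) by nra.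
      nra.
    + apply near_0_right_and; apply near_0_right_mul_le; lra.
  - apply (near_0_right_mono (fun d => d * (Rabs a + 1) <= e)).
    + intros d Hd Hde.
      assert (d * d * a <= d * d * Rabs a) by (apply Rmult_le_compat_l; nra).
      nra.
    + apply near_0_right_mul_le; lra.
Qed.

Lemma sign_dichotomy {X : Type} (P : X -> Prop) (D : X -> R) :
  (exists a b, P a /\ P b /\ 0 <= D a /\ D b <= 0) \/
  (exists s, (s = 1 \/ s = -1) /\ forall a, P a -> 0 < s * D a).
Proof.
  destruct (classic (exists a b, P a /\ P b /\ 0 <= D a /\ D b <= 0)) as [|Hno];
    [now left | right].
  destruct (classic (exists a, P a /\ 0 < D a)) as [(a & Ha & Da) | Hnopos].
  - exists 1. split; [now left|]. intros b Hb.
    destruct (Rle_or_lt (D b) 0); [|lra].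
    exfalso. apply Hno. exists a, b. repeat split; auto; lra.
  - exists (-1). split; [now right|]. intros b Hb.
    destruct (Rle_or_lt 0 (D b)) as [Db|]; [|lra].
    exfalso. destruct Db as [Db | Db].
    + apply Hnopos. now exists b.
    + apply Hno. exists b, b. repeat split; auto; lra.
Qed.

Lemma convex_combination_zero (d1 d2 : R) :
  0 <= d1 -> d2 <= 0 -> exists eta, 0 <= eta <= 1 /\ eta * d1 + (1 - eta) * d2 = 0.
Proof.
  intros H1 H2. destruct (Req_dec d1 d2) as [Heq | Hne].
  - exists 1. split; lra.
  - exists (d2 / (d2 - d1)).
    assert (Heta : d2 / (d2 - d1) * (d1 - d2) = - d2) by (field; lra).
    split; [split; nra | field; lra].
Qed.

(** Along [(lam, mu) -> ((1 + e) lam, mu - e (1 - mu))] the ratio [lam/(1-mu)]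
    is constant, and the right-hand side at (x, y) moves with speed
    [rhs_slope]. *)
Definition rhs_slope (n : nat) (lam mu : R) (t : typ) (x y : nat) : R :=
  lam * ext n (fst t) y - (1 - mu) * ext n (fst t) x.

Lemma ineq_rhs_perturbed n t lam mu e q x y :
  ineq_rhs n t ((1 + e) * lam - q) (mu - e * (1 - mu)) x y
  = ineq_rhs n t lam mu x y + e * rhs_slope n lam mu t x y - q * ext n (fst t) y.
Proof. unfold ineq_rhs, rhs_slope; simpl; ring. Qed.

Lemma ratio_perturbed (lam mu e q : R) :
  mu < 1 -> 0 < 1 + e ->
  ((1 + e) * lam - q) / (1 - (mu - e * (1 - mu)))
  = lam / (1 - mu) - q / ((1 - mu) * (1 + e)).
Proof.
  intros Hmu He.
  replace (1 - (mu - e * (1 - mu))) with ((1 - mu) * (1 + e)) by ring.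
  field. lra.
Qed.

Lemma tight_rhs_slope n t lam mu x y z :
  ineq_lhs n t x y z = ineq_rhs n t lam mu x y ->
  INR z * ext n (snd t) x + (INR y - INR z) * ext n (snd t) (S x)
  - INR x * ext n (snd t) x = rhs_slope n lam mu t x y.
Proof. unfold ineq_lhs, ineq_rhs, rhs_slope; simpl. lra. Qed.

Lemma in_IR_in_seq n x y z :
  in_IR n x y z -> In x (seq 0 (S n)) /\ In y (seq 0 (S n)) /\ In z (seq 0 (S n)).
Proof. unfold in_IR, in_I. rewrite !in_seq. lia. Qed.

Lemma in_S_improvable T n lam mu s :
  in_S T n lam mu -> (s = 1 \/ s = -1) ->
  (forall t x y z, In t T -> in_IR n x y z ->
     ineq_lhs n t x y z < ineq_rhs n t lam mu x y \/ 0 < s * rhs_slope n lam mu t x y) ->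
  exists lam' mu', in_S T n lam' mu' /\ lam' / (1 - mu') < lam / (1 - mu).
Proof.
  intros (Hlam & Hmu & Hfeas) Hs Hstrict.
  (* Only finitely many constraints exist (x, y, z <= n), so one step d serves all. *)
  set (idx := seq 0 (S n)).
  assert (Hnear : near_0_right (fun d =>
    (d * 2 <= 1 /\ d * 2 <= lam) /\
    forall t, In t T -> forall x, In x idx -> forall y, In y idx -> forall z, In z idx ->
      in_IR n x y z ->
      0 <= (ineq_rhs n t lam mu x y - ineq_lhs n t x y z)
           + d * (s * rhs_slope n lam mu t x y) - d * d * ext n (fst t) y)).
  { apply near_0_right_and.
    { apply near_0_right_and; apply near_0_right_mul_le; lra. }
    apply near_0_right_forall_in; intros t Ht.
    apply near_0_right_forall_in; intros x _.
    apply near_0_right_forall_in; intros y _.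
    apply near_0_right_forall_in; intros z _.
    destruct (classic (in_IR n x y z)) as [HIR | HnIR].
    - apply (near_0_right_mono _ _ (fun d _ H _ => H)).
      apply near_0_right_quadratic_nonneg.
      + specialize (Hfeas t Ht x y z HIR). lra.
      + destruct (Hstrict t x y z Ht HIR); [left; lra | now right].
    - exists 1. split; [lra | tauto]. }
  destruct (near_0_right_witness _ Hnear) as (d & Hd & (Hd1 & Hd2) & Hslack).
  assert (Hsd : 1 / 2 <= 1 + s * d) by (destruct Hs; subst; lra).
  exists ((1 + s * d) * lam - d * d), (mu - s * d * (1 - mu)). split; [split; [|split]|].
  - nra.
  - nra.
  - intros t Ht x y z HIR. rewrite ineq_rhs_perturbed.
    destruct (in_IR_in_seq n x y z HIR) as (Hx & Hy & Hz).
    specialize (Hslack t Ht x Hx y Hy z Hz HIR). lra.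
  - rewrite ratio_perturbed by lra.
    assert (0 < d * d / ((1 - mu) * (1 + s * d))) by (apply Rdiv_lt_0_compat; nra).
    lra.
Qed.

Theorem lemma3 (T : list typ) (n : nat) (hn : (1 <= n)%nat)
  (lh mh : R) (hS : in_S T n lh mh) (hopt : is_gamma T n (lh / (1 - mh))) :
  exists t1 t2 x1 y1 z1 x2 y2 z2 eta,
    In t1 T /\ In t2 T /\ in_IR n x1 y1 z1 /\ in_IR n x2 y2 z2 /\
    0 <= eta <= 1 /\
    ineq_lhs n t1 x1 y1 z1 = ineq_rhs n t1 lh mh x1 y1 /\
    ineq_lhs n t2 x2 y2 z2 = ineq_rhs n t2 lh mh x2 y2 /\
    (let f1 := ext n (snd t1) in let f2 := ext n (snd t2) in
     eta * (INR z1 * f1 x1 + (INR y1 - INR z1) * f1 (S x1))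
     + (1 - eta) * (INR z2 * f2 x2 + (INR y2 - INR z2) * f2 (S x2))
     = eta * (INR x1 * f1 x1) + (1 - eta) * (INR x2 * f2 x2)).
Proof.
  destruct (sign_dichotomy
    (fun '(t, x, y, z) => In t T /\ in_IR n x y z /\ ineq_lhs n t x y z = ineq_rhs n t lh mh x y)
    (fun '(t, x, y, z) => rhs_slope n lh mh t x y))
    as [([[[t1 x1] y1] z1] & [[[t2 x2] y2] z2] & (Ht1 & HIR1 & E1) & (Ht2 & HIR2 & E2) & D1 & D2)
       | (s & Hs & Hslope)].
  - simpl in D1, D2.
    destruct (convex_combination_zero _ _ D1 D2) as (eta & Heta & Hzero).
    exists t1, t2, x1, y1, z1, x2, y2, z2, eta.
    do 7 (split; [assumption|]). cbv zeta.
    apply tight_rhs_slope in E1, E2.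
    apply Rminus_diag_uniq. rewrite <- Hzero, <- E1, <- E2. ring.
  - exfalso.
    destruct (in_S_improvable T n lh mh s hS Hs) as (lam & mu & HS & Hlt).
    + intros t x y z Ht HIR.
      destruct (proj2 (proj2 hS) t Ht x y z HIR) as [Hlt | Heq]; [now left | right].
      now apply (Hslope (t, x, y, z)).
    + apply (Rlt_not_le _ _ Hlt), (proj1 hopt). now exists lam, mu.
Qed.
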